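(* Let $n,k,l$ be nonnegative integers with $k+l\le n$, let $\alpha,\beta>-1$, set $\sigma=\alpha+\beta+1$, and for $h=k,\ldots,n-l$ and $i=k+l,\ldots,n$ define \[ z_{hi}=\binom{n}{h}\frac{(2i+\sigma)(k+l-n)_{i-k-l}(\alpha+2l+1)_{n-l-h}(\beta+2k+1)_{h-k}}{(\alpha+2l+1)_{i-k-l}\,(i+k+l+\sigma)_{n+1-k-l}},\qquad w_{hi}=Q_{i-k-l}(h-k;\,\beta+2k,\,\alpha+2l,\,n-k-l). \] Then for each fixed $i$ (and whenever the indices involved lie in the range $k\le h\le n-l$): \[ z_{ki}=\binom{n}{k}\frac{(2i+\sigma)(\alpha+l+i+1-k)_{n-i}(k+l-n)_{i-k-l}}{(i+k+l+\sigma)_{n-k-l+1}}, \] \[ z_{hi}=\frac{(n+1-h)(\beta+k+h)}{h(\alpha+l+n+1-h)}\,z_{h-1,i}\qquad(h=k+1,\ldots,n-l); \] and \[ w_{ki}=1,\qquad w_{k+1,i}=1+\frac{(i-k-l)(i+k+l+\sigma)}{(\beta+2k+1)(k+l-n)}, \] \[ w_{hi}=T_i(h)\,w_{h-1,i}+V(h)\,w_{h-2,i}\qquad(h=k+2,\ldots,n-l), \] where \[ V(h)=\frac{(h-k-1)(l+n+\alpha+2-h)}{(h+k+\beta)(h+l-n-1)},\qquad T_i(h)=1-V(h)-\frac{(k+l-i)(i+k+l+\sigma)}{(h+k+\beta)(h+l-n-1)}. \]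
   Context: Pochhammer symbol: $(a)_0=1$, $(a)_j=a(a+1)\cdots(a+j-1)$. Hahn polynomials: for a nonnegative integer $N$, $a,b>-1$ and $m=0,1,\ldots,N$, $Q_m(x;a,b,N)=\sum_{j=0}^m\frac{(-m)_j(m+a+b+1)_j(-x)_j}{j!\,(a+1)_j\,(-N)_j}$. (The products $d_{hi}=z_{hi}w_{hi}$ are the coefficients of the Bernstein polynomial $B^n_h(x)=\binom nh x^h(1-x)^{n-h}$ in the basis of modified Jacobi polynomials $J_{i,k,l}^{(\alpha,\beta)}(x)=(1-x)^lx^kR^{(\alpha+2l,\beta+2k)}_{i-k-l}(x)$, $i=k+l,\ldots,n$, with $R^{(a,b)}_m$ the shifted Jacobi polynomials.) *)

From mathcomp Require Import all_boot all_order all_algebra.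
Set Implicit Arguments. Unset Strict Implicit. Unset Printing Implicit Defensive.
Import Order.TTheory GRing.Theory Num.Theory.
Local Open Scope ring_scope.

Definition poch {R : realFieldType} (a : R) (j : nat) : R :=
  \prod_(0 <= m < j) (a + m%:R).

Definition hahnQ {R : realFieldType} (m : nat) (x a b : R) (N : nat) : R :=
  \sum_(j < m.+1)
     (poch (- m%:R) j * poch (m%:R + a + b + 1) j * poch (- x) j)
     / (j`!%:R * poch (a + 1) j * poch (- N%:R) j).

(* z_{hi}, for h = k..n-l and i = k+l..n (nat subtractions are exact there). *)
Definition zc {R : realFieldType} (al be : R) (n k l h i : nat) : R :=
  let sigma := al + be + 1 in
  'C(n, h)%:R *
  ((2 * i%:R + sigma) * poch ((k + l)%:R - n%:R) (i - k - l)
     * poch (al + 2 * l%:R + 1) (n - l - h) * poch (be + 2 * k%:R + 1) (h - k))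
  / (poch (al + 2 * l%:R + 1) (i - k - l)
     * poch (i%:R + k%:R + l%:R + sigma) (n + 1 - k - l)).

Definition wc {R : realFieldType} (al be : R) (n k l h i : nat) : R :=
  hahnQ (i - k - l) (h - k)%:R (be + 2 * k%:R) (al + 2 * l%:R) (n - k - l).

From mathcomp Require Import all_boot all_order all_algebra.
From mathcomp Require Import ring lra zify.
Import Order.TTheory GRing.Theory Num.Theory.
Local Open Scope ring_scope.

(* The recurrences for z are ratios of consecutive binomial coefficients and
   Pochhammer symbols.  Those for w come from the difference equation of the
   Hahn polynomial Q = Q_m(.; a, b, N):
     (x+a+1)(x-N) (Q(x+1) - Q(x)) - x(x-b-N-1) (Q(x) - Q(x-1)) = m(m+a+b+1) Q(x).
   The operator on the left sends (-x)_{j+1} to a combination of (-x)_{j+1}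
   and (-x)_j, and the ratio of consecutive coefficients of Q_m makes the
   resulting sum telescope.  Solving for Q(x+1) at x = h-k-1 gives the
   three-term recurrence in h, while w_{k,i} = Q_m(0) and w_{k+1,i} = Q_m(1). *)

Lemma natrBB {R : pzRingType} (p q r : nat) :
  (q + r <= p)%N -> (p - q - r)%:R = p%:R - q%:R - r%:R :> R.
Proof. by move=> le_qr_p; rewrite -subnDA natrB // natrD opprD addrA. Qed.

Section Pochhammer.
Context {R : realFieldType}.
Implicit Type a : R.

Lemma poch0 a : poch a 0 = 1.
Proof. by rewrite /poch big_geq. Qed.

Lemma pochS a j : poch a j.+1 = poch a j * (a + j%:R).
Proof. by rewrite /poch big_nat_recr. Qed.

Lemma poch1 a : poch a 1 = a.
Proof. by rewrite pochS poch0 mul1r addr0. Qed.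

Lemma pochD a p q : poch a (p + q) = poch a p * poch (a + p%:R) q.
Proof.
elim: q => [|q IHq]; first by rewrite addn0 poch0 mulr1.
by rewrite addnS !pochS IHq natrD addrA mulrA.
Qed.

Lemma pochSl a j : poch a j.+1 = a * poch (a + 1) j.
Proof. by rewrite -add1n pochD poch1. Qed.

Lemma poch_gt0 a j : 0 < a -> 0 < poch a j.
Proof. by move=> a_gt0; apply: prodr_gt0 => t _; rewrite ltr_wpDr. Qed.

Lemma poch_oppn_neq0 (N j : nat) : (j <= N)%N -> poch (- N%:R) j != 0 :> R.
Proof.
elim: j => [|j IHj] le_jN; first by rewrite poch0 oner_neq0.
rewrite pochS mulf_neq0 ?IHj ?(ltnW le_jN) //.
by rewrite addrC subr_eq0 eqr_nat neq_ltn le_jN.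
Qed.

End Pochhammer.

Definition hahn_coef {R : realFieldType} (m N : nat) (a b : R) (j : nat) : R :=
  poch (- m%:R) j * poch (m%:R + a + b + 1) j
  / (j`!%:R * poch (a + 1) j * poch (- N%:R) j).

Definition hahn_op {R : realFieldType} (a b : R) (N : nat) (f : R -> R) (x : R) : R :=
  (x + a + 1) * (x - N%:R) * (f (x + 1) - f x)
  - x * (x - b - N%:R - 1) * (f x - f (x - 1)).

Section Hahn.
Variables (R : realFieldType) (a b : R) (N : nat).

Lemma hahnQE m x :
  hahnQ m x a b N = \sum_(0 <= j < m.+1) hahn_coef m N a b j * poch (- x) j.
Proof. by rewrite /hahnQ big_mkord; apply: eq_bigr => j _; rewrite mulrAC. Qed.

Lemma hahnQ_at0 m : hahnQ m 0 a b N = 1.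
Proof.
rewrite hahnQE big_nat_recl // big1 => [|j _]; last by rewrite pochSl oppr0 !mul0r mulr0.
by rewrite /hahn_coef !poch0 !mulr1 mul1r invr1 addr0.
Qed.

Lemma hahnQ_at1 m :
  hahnQ m 1 a b N = 1 + m%:R * (m%:R + a + b + 1) / ((a + 1) * - N%:R).
Proof.
rewrite hahnQE big_nat_recl //; case: m => [|m].
  by rewrite big_geq // /hahn_coef !poch0 !mulr1 mul1r invr1 !mul0r !addr0.
rewrite big_nat_recl // big1 => [|j _]; last by rewrite !pochSl addNr !mul0r !mulr0.
by rewrite /hahn_coef !poch0 !poch1 !mulr1 mul1r invr1 !mul1r addr0 mulrN1 -!mulNr opprK.
Qed.

Lemma hahn_op_ext f g x : (forall y, f y = g y) -> hahn_op a b N f x = hahn_op a b N g x.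
Proof. by move=> eq_fg; rewrite /hahn_op !eq_fg. Qed.

Lemma hahn_op_sum (I : Type) (r : seq I) (c : I -> R) (f : I -> R -> R) x :
  hahn_op a b N (fun y => \sum_(j <- r) c j * f j y) x
  = \sum_(j <- r) c j * hahn_op a b N (f j) x.
Proof.
rewrite /hahn_op -!sumrB !mulr_sumr -sumrB.
by apply: eq_bigr => j _; ring.
Qed.

Lemma hahn_op_poch j x :
  hahn_op a b N (fun y => poch (- y) j.+1) x
  = (j%:R + 1) * (j%:R + a + b + 2) * poch (- x) j.+1
    - (j%:R + 1) * (j%:R + a + 1) * (j%:R - N%:R) * poch (- x) j.
Proof.
have shift_up : poch (- (x + 1)) j.+1 = - (x + 1) * poch (- x) j.
  by rewrite pochSl opprD addrNK.
have shift_down : poch (- (x - 1)) j.+1 = poch (- x + 1) j * (- x + 1 + j%:R).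
  by rewrite pochS opprB addrC.
have cancel : - x * poch (- x + 1) j = poch (- x) j * (- x + j%:R).
  by rewrite -pochS pochSl.
rewrite /hahn_op shift_up shift_down pochS; apply/eqP; rewrite -subr_eq0; apply/eqP.
transitivity ((x - b - N%:R - 1) * (1 - x + j%:R)
              * (poch (- x) j * (- x + j%:R) - - x * poch (- x + 1) j)); first ring.
by rewrite cancel subrr mulr0.
Qed.

Hypothesis a_gtN1 : -1 < a.

Lemma hahn_coefS m j : (m <= N)%N -> (j < m)%N ->
  hahn_coef m N a b j.+1 * ((j%:R + 1) * (j%:R + a + 1) * (j%:R - N%:R))
  = hahn_coef m N a b j * ((j%:R - m%:R) * (j%:R + m%:R + a + b + 1)).
Proof.
move=> le_mN lt_jm.
have pN_neq0 : poch (- N%:R) j != 0 :> R by apply: poch_oppn_neq0; lia.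
have a1_gt0 : 0 < a + 1 by rewrite -ltrBlDr sub0r.
have pa_neq0 : poch (a + 1) j != 0 by rewrite gt_eqF // poch_gt0.
have fact_neq0 : j`!%:R != 0 :> R by rewrite pnatr_eq0 -lt0n fact_gt0.
have j1_neq0 : j%:R + 1 != 0 :> R by rewrite natr1 pnatr_eq0.
have ja_neq0 : a + 1 + j%:R != 0 by rewrite gt_eqF // ltr_wpDr.
have jN_neq0 : - N%:R + j%:R != 0 :> R.
  by rewrite addrC subr_eq0 eqr_nat neq_ltn; apply/orP; left; lia.
rewrite /hahn_coef !pochS factS natrM -natr1.
by field; rewrite pN_neq0 pa_neq0 fact_neq0 j1_neq0 ja_neq0 jN_neq0.
Qed.

Lemma hahnQ_eigen m x : (m <= N)%N ->
  hahn_op a b N (fun y => hahnQ m y a b N) x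
  = m%:R * (m%:R + a + b + 1) * hahnQ m x a b N.
Proof.
move=> le_mN; set c := hahn_coef m N a b.
rewrite (hahn_op_ext _ _ _ (hahnQE m)) hahn_op_sum big_nat_recl //.
rewrite {1}/hahn_op !poch0 !subrr !mulr0 subrr mulr0 add0r.
transitivity (\sum_(0 <= j < m)
  (c j.+1 * (j.+1%:R * (j.+1%:R + a + b + 1)) * poch (- x) j.+1
   - c j * ((j%:R - m%:R) * (j%:R + m%:R + a + b + 1)) * poch (- x) j)).
  apply: eq_big_nat => j /andP [_ lt_jm].
  rewrite hahn_op_poch mulrBr -natr1 -(hahn_coefS _ _ le_mN lt_jm) /c; ring.
transitivity (\sum_(0 <= j < m.+1) c j * (j%:R * (j%:R + a + b + 1)) * poch (- x) j
   - \sum_(0 <= j < m.+1) c j * ((j%:R - m%:R) * (j%:R + m%:R + a + b + 1)) * poch (- x) j).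
  by rewrite sumrB big_nat_recl // big_nat_recr //= subrr !(mul0r, mulr0) add0r addr0.
rewrite -sumrB hahnQE mulr_sumr; apply: eq_bigr => j _; rewrite /c; ring.
Qed.

Lemma hahnQ_succ m x : (m <= N)%N -> (x + a + 1) * (x - N%:R) != 0 ->
  hahnQ m (x + 1) a b N
  = (1 + (m%:R * (m%:R + a + b + 1) + x * (x - b - N%:R - 1))
         / ((x + a + 1) * (x - N%:R))) * hahnQ m x a b N
    - x * (x - b - N%:R - 1) / ((x + a + 1) * (x - N%:R)) * hahnQ m (x - 1) a b N.
Proof.
move=> le_mN B_neq0; have := hahnQ_eigen m x le_mN.
rewrite /hahn_op; move/eqP; rewrite subr_eq => /eqP eigen.
rewrite -[LHS](addrNK (hahnQ m x a b N)) -[_ - _](mulKf B_neq0) eigen.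
by ring.
Qed.

End Hahn.

Section Coefficients.
Variables (R : realFieldType) (al be : R) (n k l i : nat).
Hypotheses (al_gtN1 : -1 < al) (be_gtN1 : -1 < be).
Hypotheses (le_kl_n : (k + l <= n)%N) (le_kl_i : (k + l <= i)%N) (le_i_n : (i <= n)%N).

Lemma zc_first :
  zc al be n k l k i =
  'C(n, k)%:R * ((2 * i%:R + (al + be + 1))
    * poch (al + l%:R + i%:R + 1 - k%:R) (n - i)
    * poch ((k + l)%:R - n%:R) (i - k - l))
  / poch (i%:R + k%:R + l%:R + (al + be + 1)) (n - k - l + 1).
Proof.
have al_pos : 0 < al + 2 * l%:R + 1.
  by have := al_gtN1; have := ler0n R l; lra.
have split_nlk : (n - l - k = (i - k - l) + (n - i))%N by lia.
rewrite /zc subnn poch0 mulr1 split_nlk pochD natrBB //.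
rewrite (_ : al + 2 * l%:R + 1 + (i%:R - k%:R - l%:R) = al + l%:R + i%:R + 1 - k%:R); last by ring.
rewrite (_ : (n + 1 - k - l = n - k - l + 1)%N); last by lia.
set Pd := poch (al + 2 * l%:R + 1) (i - k - l).
have Pd_neq0 : Pd != 0 by rewrite gt_eqF ?poch_gt0.
rewrite invfM -[RHS]mulr1 -(divff Pd_neq0); ring.
Qed.

Lemma zc_succ_mul h : (k < h)%N -> (h <= n - l)%N ->
  h%:R * (al + l%:R + n%:R + 1 - h%:R) * zc al be n k l h i
  = (n%:R + 1 - h%:R) * (be + k%:R + h%:R) * zc al be n k l h.-1 i.
Proof.
case: h => [//|h] lt_kh le_hnl /=.
have bin : h.+1%:R * 'C(n, h.+1)%:R = (n%:R + 1 - h.+1%:R) * 'C(n, h)%:R :> R.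
  rewrite -natrM mul_bin_left natrM natrB; last by lia.
  by rewrite -natr1; ring.
have pa : poch (al + 2 * l%:R + 1) (n - l - h)
          = poch (al + 2 * l%:R + 1) (n - l - h.+1) * (al + l%:R + n%:R + 1 - h.+1%:R).
  rewrite (_ : n - l - h = (n - l - h.+1).+1)%N ?pochS ?natrBB; [congr (_ * _); ring | lia | lia].
have pb : poch (be + 2 * k%:R + 1) (h.+1 - k)
          = poch (be + 2 * k%:R + 1) (h - k) * (be + k%:R + h.+1%:R).
  by rewrite subSn ?pochS ?natrB -?natr1; [congr (_ * _); ring | lia | lia].
by rewrite /zc pa pb mulrAC !mulrA bin; ring.
Qed.

Lemma zc_succ h : (k + 1 <= h)%N -> (h <= n - l)%N ->
  zc al be n k l h i
  = ((n%:R + 1 - h%:R) * (be + k%:R + h%:R)) / (h%:R * (al + l%:R + n%:R + 1 - h%:R))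
    * zc al be n k l h.-1 i.
Proof.
rewrite addn1 => lt_kh le_hnl.
have h_neq0 : h%:R != 0 :> R by rewrite pnatr_eq0 -lt0n; lia.
have A_neq0 : al + l%:R + n%:R + 1 - h%:R != 0.
  have : (l + h <= n)%N by lia.
  rewrite -(ler_nat R) natrD => le_lh_n.
  by rewrite gt_eqF //; have := al_gtN1; have := ler0n R l; lra.
apply: (mulfI (mulf_neq0 h_neq0 A_neq0)); rewrite zc_succ_mul //.
by field; rewrite h_neq0 A_neq0.
Qed.

Lemma wc_second :
  wc al be n k l k.+1 i
  = 1 + ((i%:R - k%:R - l%:R) * (i%:R + k%:R + l%:R + (al + be + 1)))
        / ((be + 2 * k%:R + 1) * ((k + l)%:R - n%:R)).
Proof.
rewrite /wc subSnn hahnQ_at1 !natrBB // natrD.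
by congr (1 + _ / _); ring.
Qed.

Definition wc_recV (h : nat) : R :=
  ((h%:R - k%:R - 1) * (l%:R + n%:R + al + 2 - h%:R))
  / ((h%:R + k%:R + be) * (h%:R + l%:R - n%:R - 1)).

Definition wc_recT (h : nat) : R :=
  1 - wc_recV h - ((k%:R + l%:R - i%:R) * (i%:R + k%:R + l%:R + (al + be + 1)))
                  / ((h%:R + k%:R + be) * (h%:R + l%:R - n%:R - 1)).

Lemma wc_rec h : (k + 2 <= h)%N -> (h <= n - l)%N ->
  wc al be n k l h i
  = wc_recT h * wc al be n k l h.-1 i + wc_recV h * wc al be n k l h.-2 i.
Proof.
case: h => [|[|h]] le_k2h le_hnl; try lia; rewrite /wc /=.
have -> : (h.+2 - k = (h - k).+2)%N by lia.
have -> : (h.+1 - k = (h - k).+1)%N by lia.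
have le_lh2_n : l%:R + h%:R + 2 <= n%:R :> R.
  by rewrite -addrA -[2]/(2%:R) -!natrD ler_nat; lia.
have k_ge0 := ler0n R k; have l_ge0 := ler0n R l; have h_ge0 := ler0n R h.
have al_gt := al_gtN1; have be_gt := be_gtN1.
rewrite -[((h - k).+2)%:R]natr1 -[((h - k).+1)%:R]natr1 hahnQ_succ ?addrK; last 3 first.
- lra.
- lia.
- rewrite !natrBB // natrB; last by lia.
  by apply: mulf_neq0; [rewrite gt_eqF | rewrite lt_eqF] => //; lra.
rewrite -mulNr /wc_recT /wc_recV !natrBB // natrB; last by lia.
rewrite (_ : h.+2%:R = h%:R + 2 :> R); last by rewrite -addn2 natrD.
have hkbe_neq0 : h%:R + 2 + k%:R + be != 0 by rewrite gt_eqF //; lra.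
have hln_neq0 : h%:R + 2 + l%:R - n%:R - 1 != 0 :> R by rewrite lt_eqF //; lra.
by congr (_ * _ + _ * _); field; rewrite hkbe_neq0 hln_neq0.
Qed.

End Coefficients.

Theorem theorem4 (R : realFieldType) (n k l : nat) (al be : R)
  (hkl : (k + l <= n)%N) (hal : -1 < al) (hbe : -1 < be)
  (i : nat) (hi1 : (k + l <= i)%N) (hi2 : (i <= n)%N) :
  let sigma := al + be + 1 in
  let V := fun h : nat =>
    ((h%:R - k%:R - 1) * (l%:R + n%:R + al + 2 - h%:R))
    / ((h%:R + k%:R + be) * (h%:R + l%:R - n%:R - 1)) in
  let T := fun h : nat =>
    1 - V h - ((k%:R + l%:R - i%:R) * (i%:R + k%:R + l%:R + sigma))
              / ((h%:R + k%:R + be) * (h%:R + l%:R - n%:R - 1)) in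
  [/\ zc al be n k l k i =
        'C(n, k)%:R * ((2 * i%:R + sigma)
          * poch (al + l%:R + i%:R + 1 - k%:R) (n - i)
          * poch ((k + l)%:R - n%:R) (i - k - l))
        / poch (i%:R + k%:R + l%:R + sigma) (n - k - l + 1),
      (forall h : nat, (k + 1 <= h)%N -> (h <= n - l)%N ->
        zc al be n k l h i =
          ((n%:R + 1 - h%:R) * (be + k%:R + h%:R))
          / (h%:R * (al + l%:R + n%:R + 1 - h%:R)) * zc al be n k l h.-1 i),
      wc al be n k l k i = 1,
      ((k + 1 <= n - l)%N ->
        wc al be n k l k.+1 i =
          1 + ((i%:R - k%:R - l%:R) * (i%:R + k%:R + l%:R + sigma))
              / ((be + 2 * k%:R + 1) * ((k + l)%:R - n%:R)))
    & (forall h : nat, (k + 2 <= h)%N -> (h <= n - l)%N ->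
        wc al be n k l h i = T h * wc al be n k l h.-1 i + V h * wc al be n k l h.-2 i)].
Proof.
move=> sigma V T; split.
- exact: zc_first.
- exact: zc_succ.
- by rewrite /wc subnn hahnQ_at0.
- by move=> _; exact: wc_second.
- exact: wc_rec.
Qed.
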